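(* Let $\Omega$ be a finite set, $k\geq3$, $\Psi$ a finite nonempty set of functions $\Omega^k\to(0,\infty)$ and $\Psi^*=\{\psi^J:\psi\in\Psi,\,J\subset[k]\}$. For every integer $L>0$ and every $\alpha>0$ there exist $\varepsilon=\varepsilon(\alpha,L,\Psi)>0$ and $n_0=n_0(\varepsilon,L)$ such that the following holds. Let $G$ be a factor graph with $n>n_0$ variable nodes all of whose weight functions lie in $\Psi^*$, and suppose $\mu_G$ is $(\varepsilon,2)$-symmetric. Let $G^+$ be obtained from $G$ by adding $L$ constraint nodes $b_1,\ldots,b_L$ with arbitrary neighbourhoods and arbitrary weight functions $\psi_{b_1},\ldots,\psi_{b_L}\in\Psi^*$. Then $\mu_{G^+}$ is $(\alpha,2)$-symmetric and $$\sum_{x\in V(G)}\left\|\mu_{G,x}-\mu_{G^+,x}\right\|_{TV}<\alpha n.$$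
   Context: Factor graphs: a factor graph $G$ has variable nodes $V(G)$, constraint nodes $F(G)$, for each $a\in F(G)$ an ordered tuple $\partial a$ of variable nodes and a weight function $\psi_a:\Omega^{|\partial a|}\to(0,\infty)$; its Gibbs measure is $\mu_G(\sigma)=Z_G^{-1}\prod_a\psi_a(\sigma(\partial a))$ on $\Omega^{V(G)}$, and $\mu_{G,x}$ is the marginal of $x$. For $\psi:\Omega^k\to(0,\infty)$ and $J\subset[k]$, $\psi^J:\Omega^J\to(0,\infty)$ is $\psi^J((\sigma_j)_{j\in J})=|\Omega|^{|J|-k}\sum_{(\sigma_j)_{j\notin J}\in\Omega^{k-|J|}}\psi(\sigma_1,\ldots,\sigma_k)$. For a probability measure $\mu$ on $\Omega^n$ (coordinates identified with the $n$ variable nodes), $\mu_x$ and $\mu_{x,y}$ denote its one- and two-coordinate marginals; $\mu$ is $(\varepsilon,2)$-symmetric if $\sum_{x,y\in[n]}\|\mu_{x,y}-\mu_x\otimes\mu_y\|_{TV}<\varepsilon n^2$. *)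

From HB Require Import structures.
From Stdlib Require Import Reals.
From mathcomp Require Import all_boot.

Set Implicit Arguments.
Unset Strict Implicit.
Unset Printing Implicit Defensive.

Local Open Scope R_scope.

(* psi^J, given the values tau j for j in J (values of tau outside J are ignored):
   |Omega|^(|J|-k) * sum over the coordinates outside J. *)
Definition psiJ (Om : finType) (k : nat) (psi : {ffun 'I_k -> Om} -> R)
    (J : {set 'I_k}) (tau : 'I_k -> Om) : R :=
  (\big[Rplus/0]_(rho : {ffun 'I_k -> Om} | [forall j in J, rho j == tau j]) psi rho)
  / pow (INR #|Om|) (k - #|J|)%N.

(* A constraint node whose weight function is psi^J (an element of Psi^* when
   psi is in Psi); its neighbourhood is the tuple (c_nb j)_{j in J}, ordered
   by j (values of c_nb outside J are irrelevant). *)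
Record constraint (Om : finType) (k n : nat) := Constraint {
  c_psi : {ffun 'I_k -> Om} -> R ;
  c_J   : {set 'I_k} ;
  c_nb  : 'I_k -> 'I_n }.

Definition factor_graph (Om : finType) (k n : nat) := seq (constraint Om k n).

Definition in_Psi_star (Om : finType) (k n : nat)
    (Psi : list ({ffun 'I_k -> Om} -> R)) (a : constraint Om k n) : Prop :=
  List.In (c_psi a) Psi.

Definition gweight (Om : finType) (k n : nat) (G : factor_graph Om k n)
    (s : {ffun 'I_n -> Om}) : R :=
  \big[Rmult/1]_(a <- G) psiJ (c_psi a) (c_J a) (fun j => s (c_nb a j)).

Definition partition_fn (Om : finType) (k n : nat) (G : factor_graph Om k n) : R :=
  \big[Rplus/0]_(s : {ffun 'I_n -> Om}) gweight G s.

Definition gibbs (Om : finType) (k n : nat) (G : factor_graph Om k n)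
    (s : {ffun 'I_n -> Om}) : R :=
  gweight G s / partition_fn G.

Definition marg1 (Om : finType) (n : nat) (mu : {ffun 'I_n -> Om} -> R)
    (x : 'I_n) (w : Om) : R :=
  \big[Rplus/0]_(s : {ffun 'I_n -> Om} | s x == w) mu s.

Definition marg2 (Om : finType) (n : nat) (mu : {ffun 'I_n -> Om} -> R)
    (x y : 'I_n) (w w' : Om) : R :=
  \big[Rplus/0]_(s : {ffun 'I_n -> Om} | (s x == w) && (s y == w')) mu s.

Definition tv1 (Om : finType) (p q : Om -> R) : R :=
  / 2 * \big[Rplus/0]_(w : Om) Rabs (p w - q w).

Definition tv2 (Om : finType) (p q : Om -> Om -> R) : R :=
  / 2 * \big[Rplus/0]_(w : Om) \big[Rplus/0]_(w' : Om) Rabs (p w w' - q w w').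

Definition symmetric2 (Om : finType) (n : nat) (eps : R)
    (mu : {ffun 'I_n -> Om} -> R) : Prop :=
  \big[Rplus/0]_(x : 'I_n) \big[Rplus/0]_(y : 'I_n)
     tv2 (marg2 mu x y) (fun w w' => marg1 mu x w * marg1 mu y w')
  < eps * pow (INR n) 2.

From HB Require Import structures.
From Stdlib Require Import Reals Lra Psatz FunctionalExtensionality.
From mathcomp Require Import all_boot.

Set Implicit Arguments.
Unset Strict Implicit.
Unset Printing Implicit Defensive.

Local Open Scope R_scope.

(* Adding the constraints b_1, ..., b_L multiplies mu_G by a density
   F = psi_b / E, and F <= K := (U / lo)^L when every weight function in Psi^*
   takes values in [lo, U].  Write C_{(x,w),(y,w')} for the covariances of the
   events {sigma_x = w} under mu_G, so that (eps,2)-symmetry says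
   sum |C| < 2 eps n^2.

   The change of the marginal of (x,w) is d_{x,w} = E_mu[F (1{sigma_x = w} - mu_x(w))].
   Testing against signs and using AM-GM, sum |d| <= K (t/2 + E_mu[Q^2]/(2t)) with
   Q a +-1 combination of centred indicators, and E_mu[Q^2] <= sum |C|; t of order n
   gives sum |d| = O(K sqrt(eps) n).

   The new covariances are C'' - d d^T, where C'' uses the new measure but the old
   means.  Expanding sum C''^2 as a double sum over pairs of configurations shows
   it is at most K^2 sum C^2 <= K^2 sum |C|, and AM-GM once more bounds sum |C''|
   by O(K |Omega| sqrt(eps)) n^2.  Both conclusions follow for eps small in terms of alpha,
   K and |Omega|. *)

Local Notation "\sum_ ( i <- r | P ) F" := (\big[Rplus/0]_(i <- r | P) F) : R_scope.
Local Notation "\sum_ ( i | P ) F" := (\big[Rplus/0]_(i | P) F) : R_scope.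
Local Notation "\sum_ ( i : t ) F" := (\big[Rplus/0]_(i : t) F) : R_scope.
Local Notation "\sum_ i F" := (\big[Rplus/0]_i F) : R_scope.

(* The generic bigop lemmas return terms whose operators are these canonical
   instances rather than [Rplus] and [Rmult], which [ring] and [lra] do not
   recognise; the [Rsum_] restatements below hide them. *)
HB.instance Definition _ := Monoid.isComLaw.Build R 0 Rplus
  (fun a b c => esym (Rplus_assoc a b c)) Rplus_comm Rplus_0_l.
HB.instance Definition _ := Monoid.isComLaw.Build R 1 Rmult
  (fun a b c => esym (Rmult_assoc a b c)) Rmult_comm Rmult_1_l.
HB.instance Definition _ := Monoid.isMulLaw.Build R 0 Rmult Rmult_0_l Rmult_0_r.
HB.instance Definition _ := Monoid.isAddLaw.Build R Rmult Rplus
  Rmult_plus_distr_r Rmult_plus_distr_l.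

Lemma Rsum_le (I : Type) (r : seq I) (P : pred I) (F G : I -> R) :
  (forall i, P i -> F i <= G i) -> \sum_(i <- r | P i) F i <= \sum_(i <- r | P i) G i.
Proof. by move=> FG; apply: (big_ind2 (fun a b => a <= b)) => [|*|i /FG]; lra. Qed.

Lemma Rsum_ge0 (I : Type) (r : seq I) (P : pred I) (F : I -> R) :
  (forall i, P i -> 0 <= F i) -> 0 <= \sum_(i <- r | P i) F i.
Proof. by move=> F0; apply: (big_ind (fun a => 0 <= a)) => [|*|i /F0]; lra. Qed.

Lemma Rabs_sum_le (I : Type) (r : seq I) (P : pred I) (F : I -> R) :
  Rabs (\sum_(i <- r | P i) F i) <= \sum_(i <- r | P i) Rabs (F i).
Proof.
apply: (big_ind2 (fun a b => Rabs a <= b)) => [|a b c d|i _]; last lra.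
- by rewrite Rabs_R0; lra.
- by have := Rabs_triang a c; lra.
Qed.

Lemma Rsum_distrr (I : Type) (r : seq I) (P : pred I) (F : I -> R) (c : R) :
  c * \sum_(i <- r | P i) F i = \sum_(i <- r | P i) (c * F i).
Proof. exact: big_distrr. Qed.

Lemma Rsum_distrl (I : Type) (r : seq I) (P : pred I) (F : I -> R) (c : R) :
  (\sum_(i <- r | P i) F i) * c = \sum_(i <- r | P i) (F i * c).
Proof. exact: big_distrl. Qed.

Lemma Rsum_split (I : Type) (r : seq I) (P : pred I) (F G : I -> R) :
  \sum_(i <- r | P i) (F i + G i) = \sum_(i <- r | P i) F i + \sum_(i <- r | P i) G i.
Proof. exact: big_split. Qed.

Lemma Rsum_exchange (I J : finType) (F : I -> J -> R) :
  \sum_(i : I) \sum_(j : J) F i j = \sum_(j : J) \sum_(i : I) F i j.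
Proof. exact: exchange_big. Qed.

Lemma Rsum_const (I : finType) (c : R) : \sum_(i : I) c = INR #|I| * c.
Proof.
rewrite big_const; elim: #|I| => [|m IHm] /=; first lra.
rewrite IHm; case: m IHm => [|m] _ /=; lra.
Qed.

Lemma Rsum_ge_term (I : finType) (P : pred I) (F : I -> R) (j : I) :
  P j -> (forall i, P i -> 0 <= F i) -> F j <= \sum_(i | P i) F i.
Proof.
move=> Pj F0; rewrite (bigD1 j) //=.
have : 0 <= \sum_(i | P i && (i != j)) F i.
  by apply: Rsum_ge0 => i /andP [Pi _]; apply: F0.
lra.
Qed.

Lemma Rsum_sqr (I : finType) (a : I -> R) :
  (\sum_(i : I) a i) ^ 2 = \sum_(i : I) \sum_(j : I) (a i * a j).
Proof. by rewrite /= Rmult_1_r big_distrlr. Qed.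

Lemma exchange_big4 (I J : finType) (H : I -> I -> J -> J -> R) :
  \sum_(i : I) \sum_(i' : I) \sum_(j : J) \sum_(j' : J) H i i' j j' =
  \sum_(j : J) \sum_(j' : J) \sum_(i : I) \sum_(i' : I) H i i' j j'.
Proof.
under eq_bigr => i _ do rewrite Rsum_exchange.
under eq_bigr => i _ do under eq_bigr => j _ do rewrite Rsum_exchange.
rewrite Rsum_exchange; apply: eq_bigr => j _.
by rewrite Rsum_exchange.
Qed.

Lemma Rprod_bounds (T : Type) (r : seq T) (f : T -> R) (lo hi : R) :
  0 <= lo -> (forall i, List.In i r -> lo <= f i <= hi) ->
  lo ^ size r <= \big[Rmult/1]_(i <- r) f i <= hi ^ size r.
Proof.
move=> lo0; elim: r => [|x r IHr] fb; first by rewrite big_nil /=; lra.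
rewrite big_cons /=.
have [fx_lo fx_hi] := fb x (or_introl erefl).
have [r_lo r_hi] := IHr (fun i ri => fb i (or_intror ri)).
have := pow_le _ (size r) lo0.
by split; apply: Rmult_le_compat => //; lra.
Qed.

Lemma Rabs_le_AMGM (b t : R) : 0 < t -> Rabs b <= t / 2 + b ^ 2 / (2 * t).
Proof.
move=> t0.
have -> : b ^ 2 = Rabs b ^ 2 by rewrite -!Rsqr_pow2 Rsqr_abs.
have -> : t / 2 + Rabs b ^ 2 / (2 * t) = Rabs b + (Rabs b - t) ^ 2 / (2 * t)
  by field; lra.
have : 0 <= (Rabs b - t) ^ 2 / (2 * t).
  by apply: Rle_mult_inv_pos; [apply: pow2_ge_0 | lra].
lra.
Qed.

Definition expect (S : finType) (w g : S -> R) : R := \sum_(s : S) (w s * g s).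

Definition reweight (S : finType) (mu F : S -> R) (s : S) : R := mu s * F s.

Section ExpectIdentities.
Variables (S : finType) (w : S -> R).
Hypothesis w_sum1 : \sum_(s : S) w s = 1.

Lemma expect_subr (g : S -> R) (a : R) :
  expect w (fun s => g s - a) = expect w g - a.
Proof.
have -> : expect w g - a = \sum_(s : S) (w s * g s + - a * w s).
  by rewrite Rsum_split -Rsum_distrr w_sum1 /=; rewrite /expect; ring.
by apply: eq_bigr => s _; ring.
Qed.

Lemma expect_centered_mul (g h : S -> R) (a b : R) :
  expect w (fun s => (g s - a) * (h s - b)) =
  expect w (fun s => g s * h s) - b * expect w g - a * expect w h + a * b.
Proof.
have -> : expect w (fun s => g s * h s) - b * expect w g - a * expect w h + a * b =
          \sum_(s : S) (w s * (g s * h s) + - b * (w s * g s) + - a * (w s * h s)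
                         + a * b * w s).
  by rewrite !Rsum_split /= -!Rsum_distrr w_sum1 /expect; ring.
by apply: eq_bigr => s _; ring.
Qed.

End ExpectIdentities.

Section ChangeOfMeasure.
Variables (S I : finType) (mu F : S -> R) (K : R) (f : I -> S -> R).
Hypothesis mu_ge0 : forall s, 0 <= mu s.
Hypothesis mu_sum1 : \sum_(s : S) mu s = 1.
Hypothesis F_ge0 : forall s, 0 <= F s.
Hypothesis F_leK : forall s, F s <= K.
Hypothesis reweight_sum1 : \sum_(s : S) reweight mu F s = 1.
Hypothesis f01 : forall p s, 0 <= f p s <= 1.

Local Notation nu := (reweight mu F).

Definition centered (p : I) (s : S) : R := f p s - expect mu (f p).

(* Centred at the [mu]-means whatever the weight [w]. *)
Definition ccov (w : S -> R) (p q : I) : R :=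
  expect w (fun s => centered p s * centered q s).

Definition shift (p : I) : R := expect nu (centered p).

Definition cov_mass : R := \sum_(p : I) \sum_(q : I) Rabs (ccov mu p q).

Lemma ccov_mu p q :
  expect mu (fun s => f p s * f q s) - expect mu (f p) * expect mu (f q) = ccov mu p q.
Proof. by rewrite /ccov /centered expect_centered_mul //; ring. Qed.

Lemma expect_reweight p : expect nu (f p) = expect mu (f p) + shift p.
Proof. by rewrite /shift /centered expect_subr //; ring. Qed.

Lemma ccov_reweight p q :
  expect nu (fun s => f p s * f q s) - expect nu (f p) * expect nu (f q) =
  ccov nu p q - shift p * shift q.
Proof. by rewrite /ccov /shift /centered expect_centered_mul // !expect_subr //; ring. Qed.

Lemma K_ge1 : 1 <= K.
Proof.
rewrite -reweight_sum1 -[K]Rmult_1_l -mu_sum1 Rsum_distrl.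
apply: Rsum_le => s _; rewrite /reweight.
by apply: Rmult_le_compat_l.
Qed.

Lemma expect_mu_f01 p : 0 <= expect mu (f p) <= 1.
Proof.
split; first by apply: Rsum_ge0 => s _; have := f01 p s; have := mu_ge0 s; nra.
rewrite -mu_sum1; apply: Rsum_le => s _; have := f01 p s; have := mu_ge0 s; nra.
Qed.

Lemma Rabs_centered_le1 p s : Rabs (centered p s) <= 1.
Proof.
have := f01 p s; have := expect_mu_f01 p.
by rewrite /centered => *; apply: Rabs_le; lra.
Qed.

Lemma Rabs_ccov_mu_le1 p q : Rabs (ccov mu p q) <= 1.
Proof.
apply: Rle_trans (Rabs_sum_le _ _ _) _; rewrite -mu_sum1.
apply: Rsum_le => s _; rewrite !Rabs_mult (Rabs_right (mu s)); last exact/Rle_ge.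
have : Rabs (centered p s) * Rabs (centered q s) <= 1.
  have := Rabs_centered_le1 p s; have := Rabs_centered_le1 q s.
  have := Rabs_pos (centered p s); have := Rabs_pos (centered q s); nra.
have := mu_ge0 s; nra.
Qed.

Lemma expect_reweight_le_AMGM (g : S -> R) (t : R) : 0 < t ->
  expect nu g <= K * (t / 2 + expect mu (fun s => g s ^ 2) / (2 * t)).
Proof.
move=> t0.
have -> : K * (t / 2 + expect mu (fun s => g s ^ 2) / (2 * t)) =
          \sum_(s : S) (mu s * K * (t / 2 + g s ^ 2 / (2 * t))).
  rewrite (eq_bigr (fun s => K * (t / 2) * mu s + K / (2 * t) * (mu s * g s ^ 2)));
    last by move=> s _; rewrite /Rdiv; ring.
  by rewrite Rsum_split /= -!Rsum_distrr mu_sum1 /expect /Rdiv; ring.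
apply: Rsum_le => s _; rewrite /reweight.
have g_le := Rle_trans _ _ _ (Rle_abs (g s)) (Rabs_le_AMGM (g s) t0).
have bound0 : 0 <= t / 2 + g s ^ 2 / (2 * t).
  have : 0 <= g s ^ 2 / (2 * t) by apply: Rle_mult_inv_pos; [apply: pow2_ge_0 | lra].
  lra.
rewrite !Rmult_assoc; apply: Rmult_le_compat_l; first exact: mu_ge0.
apply: Rle_trans (Rmult_le_compat_l _ _ _ (F_ge0 s) g_le) _.
exact: Rmult_le_compat_r.
Qed.

Lemma expect_sqr_signed_sum_le (c : I -> R) : (forall p, Rabs (c p) <= 1) ->
  expect mu (fun s => (\sum_(p : I) c p * centered p s) ^ 2) <= cov_mass.
Proof.
move=> c1.
have -> : expect mu (fun s => (\sum_(p : I) c p * centered p s) ^ 2) =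
          \sum_(p : I) \sum_(q : I) (c p * c q * ccov mu p q).
  rewrite /expect; under eq_bigr => s _ do rewrite Rsum_sqr Rsum_distrr.
  rewrite Rsum_exchange; apply: eq_bigr => p _.
  under eq_bigr => s _ do rewrite Rsum_distrr.
  rewrite Rsum_exchange; apply: eq_bigr => q _.
  by rewrite /ccov /expect Rsum_distrr; apply: eq_bigr => s _ /=; ring.
apply: Rsum_le => p _; apply: Rsum_le => q _.
apply: Rle_trans (Rle_abs _) _; rewrite !Rabs_mult.
have : Rabs (c p) * Rabs (c q) <= 1.
  have := c1 p; have := c1 q; have := Rabs_pos (c p); have := Rabs_pos (c q); nra.
have := Rabs_pos (ccov mu p q); nra.
Qed.

(* Testing the shifts against their signs turns the first-moment bound into a
   second-moment bound under [mu], where AM-GM and [expect_sqr_signed_sum_le] apply. *)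
Lemma sum_Rabs_shift_le t : 0 < t ->
  \sum_(p : I) Rabs (shift p) <= K * (t / 2 + cov_mass / (2 * t)).
Proof.
move=> t0.
pose sg p := if Rle_dec 0 (shift p) then 1 else -1.
have sg1 p : Rabs (sg p) <= 1.
  by rewrite /sg; case: Rle_dec => hp; rewrite ?Rabs_Ropp Rabs_R1; lra.
have abs_shift p : Rabs (shift p) = \sum_(s : S) (nu s * (sg p * centered p s)).
  transitivity (sg p * shift p).
    by rewrite /sg; case: Rle_dec => hp /=; [rewrite Rabs_right | rewrite Rabs_left]; lra.
  by rewrite /shift /expect Rsum_distrr; apply: eq_bigr => s _; ring.
have -> : \sum_(p : I) Rabs (shift p) =
          expect nu (fun s => \sum_(p : I) sg p * centered p s).
  under eq_bigr => p _ do rewrite abs_shift.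
  by rewrite Rsum_exchange; apply: eq_bigr => s _; rewrite Rsum_distrr.
apply: Rle_trans (expect_reweight_le_AMGM _ t0) _.
apply: Rmult_le_compat_l; first by have := K_ge1; lra.
apply: Rplus_le_compat_l; apply: Rmult_le_compat_r.
  by apply: Rlt_le; apply: Rinv_0_lt_compat; lra.
exact: expect_sqr_signed_sum_le.
Qed.

Lemma sum_sqr_ccov (w : S -> R) :
  \sum_(p : I) \sum_(q : I) ccov w p q ^ 2 =
  \sum_(s : S) \sum_(s' : S) (w s * w s' * (\sum_(p : I) centered p s * centered p s') ^ 2).
Proof.
transitivity (\sum_(p : I) \sum_(q : I) \sum_(s : S) \sum_(s' : S)
  (w s * w s' * ((centered p s * centered p s') * (centered q s * centered q s')))).
  apply: eq_bigr => p _; apply: eq_bigr => q _; rewrite /ccov /expect Rsum_sqr.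
  by apply: eq_bigr => s _; apply: eq_bigr => s' _; ring.
rewrite exchange_big4; apply: eq_bigr => s _; apply: eq_bigr => s' _.
rewrite Rsum_sqr Rsum_distrr; apply: eq_bigr => p _.
by rewrite Rsum_distrr; apply: eq_bigr => q _; ring.
Qed.

(* [sum_sqr_ccov] is monotone in the weights, and [Rabs (ccov mu p q) <= 1]. *)
Lemma sum_sqr_ccov_reweight_le :
  \sum_(p : I) \sum_(q : I) ccov nu p q ^ 2 <= K ^ 2 * cov_mass.
Proof.
rewrite sum_sqr_ccov.
apply: Rle_trans (_ : _ <= K ^ 2 * \sum_(s : S) \sum_(s' : S)
  (mu s * mu s' * (\sum_(p : I) centered p s * centered p s') ^ 2)) _.
  rewrite Rsum_distrr; apply: Rsum_le => s _; rewrite Rsum_distrr; apply: Rsum_le => s' _.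
  set r := (\sum_(p : I) _) ^ 2.
  have r0 : 0 <= r by apply: pow2_ge_0.
  have nu_le x : 0 <= reweight mu F x <= mu x * K.
    by rewrite /reweight; have := mu_ge0 x; have := F_ge0 x; have := F_leK x; split; nra.
  have [nus0 nusK] := nu_le s; have [nus'0 nus'K] := nu_le s'.
  have : reweight mu F s * reweight mu F s' <= mu s * K * (mu s' * K)
    by apply: Rmult_le_compat.
  by move=> prod_le; have := Rmult_le_compat_r _ _ _ r0 prod_le; lra.
apply: Rmult_le_compat_l; first exact: pow2_ge_0.
rewrite -sum_sqr_ccov; apply: Rsum_le => p _; apply: Rsum_le => q _.
have := Rabs_ccov_mu_le1 p q; have := Rabs_pos (ccov mu p q).
rewrite -Rsqr_pow2 Rsqr_abs /Rsqr; nra.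
Qed.

Lemma sum_Rabs_ccov_reweight_le t : 0 < t ->
  \sum_(p : I) \sum_(q : I) Rabs (ccov nu p q) <=
  INR #|I| ^ 2 * (t / 2) + K ^ 2 * cov_mass / (2 * t).
Proof.
move=> t0.
apply: Rle_trans (_ : _ <= \sum_(p : I) \sum_(q : I) (t / 2 + / (2 * t) * ccov nu p q ^ 2)) _.
  apply: Rsum_le => p _; apply: Rsum_le => q _.
  by have := Rabs_le_AMGM (ccov nu p q) t0; rewrite /Rdiv; lra.
rewrite (_ : \sum_(p : I) \sum_(q : I) (t / 2 + / (2 * t) * ccov nu p q ^ 2) =
   \sum_(p : I) \sum_(q : I) (t / 2) + / (2 * t) * \sum_(p : I) \sum_(q : I) ccov nu p q ^ 2);
  last by rewrite Rsum_distrr -Rsum_split; apply: eq_bigr => p _; rewrite Rsum_distrr -Rsum_split.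
rewrite !Rsum_const.
have inv0 : 0 <= / (2 * t) by apply: Rlt_le; apply: Rinv_0_lt_compat; lra.
have := Rmult_le_compat_l _ _ _ inv0 sum_sqr_ccov_reweight_le.
rewrite /Rdiv /=; lra.
Qed.

Lemma sum_Rabs_shift_lt (N g eps : R) : 0 < N -> 0 < g ->
  cov_mass < 2 * eps * N ^ 2 -> 2 * K ^ 2 * eps <= g ^ 2 ->
  \sum_(p : I) Rabs (shift p) < g * N.
Proof.
move=> N0 g0 cov_lt eps_le.
have K1 := K_ge1.
have t0 : 0 < g * N / K by apply: Rdiv_lt_0_compat; nra.
apply: Rle_lt_trans (sum_Rabs_shift_le t0) _.
have -> : K * (g * N / K / 2 + cov_mass / (2 * (g * N / K))) =
          g * N / 2 + K ^ 2 * cov_mass / (2 * g * N) by field; lra.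
have : K ^ 2 * cov_mass < g ^ 2 * N ^ 2.
  have K20 : 0 < K ^ 2 by apply: pow_lt; lra.
  have := Rmult_lt_compat_l _ _ _ K20 cov_lt.
  have := pow2_ge_0 N; nra.
move=> cov_lt'.
have : K ^ 2 * cov_mass / (2 * g * N) < g ^ 2 * N ^ 2 / (2 * g * N).
  by apply: Rmult_lt_compat_r => //; apply: Rinv_0_lt_compat; nra.
have -> : g ^ 2 * N ^ 2 / (2 * g * N) = g * N / 2 by field; lra.
lra.
Qed.

Lemma sum_Rabs_ccov_reweight_lt (N M alpha eps : R) : 0 < N -> 0 < alpha -> 0 <= M ->
  INR #|I| <= M * N -> cov_mass < 2 * eps * N ^ 2 ->
  2 * K ^ 2 * (M ^ 2 + 1) * eps <= alpha ^ 2 ->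
  \sum_(p : I) \sum_(q : I) Rabs (ccov nu p q) < alpha * N ^ 2.
Proof.
move=> N0 alpha0 M0 card_le cov_lt eps_le.
have M1 : 0 < M ^ 2 + 1 by have := pow2_ge_0 M; lra.
have t0 : 0 < alpha / (M ^ 2 + 1) by apply: Rdiv_lt_0_compat.
apply: Rle_lt_trans (sum_Rabs_ccov_reweight_le t0) _.
have first_half : INR #|I| ^ 2 * (alpha / (M ^ 2 + 1) / 2) <= alpha * N ^ 2 / 2.
  have card2 : INR #|I| ^ 2 <= M ^ 2 * N ^ 2.
    rewrite -Rpow_mult_distr; apply: pow_incr; split => //; exact: pos_INR.
  have -> : alpha * N ^ 2 / 2 = (M ^ 2 + 1) * N ^ 2 * (alpha / (M ^ 2 + 1) / 2)
    by field; lra.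
  apply: Rmult_le_compat_r; first by apply: Rlt_le; apply: Rdiv_lt_0_compat => //; lra.
  have := pow2_ge_0 N; nra.
have second_half : K ^ 2 * cov_mass / (2 * (alpha / (M ^ 2 + 1))) < alpha * N ^ 2 / 2.
  have -> : K ^ 2 * cov_mass / (2 * (alpha / (M ^ 2 + 1))) =
            K ^ 2 * (M ^ 2 + 1) * cov_mass / (2 * alpha) by field; lra.
  have KM0 : 0 < K ^ 2 * (M ^ 2 + 1) by have := K_ge1; have := pow_lt K 2; nra.
  have : K ^ 2 * (M ^ 2 + 1) * cov_mass < alpha ^ 2 * N ^ 2.
    have := Rmult_lt_compat_l _ _ _ KM0 cov_lt.
    have := pow2_ge_0 N; nra.
  move=> lt_sq.
  have : K ^ 2 * (M ^ 2 + 1) * cov_mass / (2 * alpha) < alpha ^ 2 * N ^ 2 / (2 * alpha).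
    by apply: Rmult_lt_compat_r => //; apply: Rinv_0_lt_compat; lra.
  have -> : alpha ^ 2 * N ^ 2 / (2 * alpha) = alpha * N ^ 2 / 2 by field; lra.
  done.
lra.
Qed.

End ChangeOfMeasure.

Section CoordinateEvents.
Variables (Om : finType) (n : nat).
Local Notation config := {ffun 'I_n -> Om}.

(* Naming the index type makes the binders of the sums here coincide
   syntactically with those of the [ChangeOfMeasure] lemmas, so that [lra]
   treats these sums as the same atoms. *)
Definition coord : finType := ('I_n * Om)%type.

Definition coord_ind (p : coord) (s : config) : R := if s p.1 == p.2 then 1 else 0.

Definition coord_cov (w : config -> R) (p q : coord) : R :=
  expect w (fun s => coord_ind p s * coord_ind q s)
  - expect w (coord_ind p) * expect w (coord_ind q).

Lemma coord_ind01 p s : 0 <= coord_ind p s <= 1.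
Proof. by rewrite /coord_ind; case: eqP; lra. Qed.

Lemma marg1_expect (w : config -> R) x a : marg1 w x a = expect w (coord_ind (x, a)).
Proof.
rewrite /marg1 /expect big_mkcond; apply: eq_bigr => s _; rewrite /coord_ind /=.
by case: eqP; lra.
Qed.

Lemma marg2_expect (w : config -> R) x y a b :
  marg2 w x y a b = expect w (fun s => coord_ind (x, a) s * coord_ind (y, b) s).
Proof.
rewrite /marg2 /expect big_mkcond; apply: eq_bigr => s _; rewrite /coord_ind /=.
by case: eqP; case: eqP => /=; lra.
Qed.

Lemma sum_coord (h : coord -> R) :
  \sum_(x : 'I_n) \sum_(a : Om) h (x, a) = \sum_(p : coord) h p.
Proof. by rewrite pair_big; apply: eq_bigr => -[x a]. Qed.

Lemma sum_coord_pairs (h : coord -> coord -> R) :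
  \sum_(x : 'I_n) \sum_(y : 'I_n) \sum_(a : Om) \sum_(b : Om) h (x, a) (y, b) =
  \sum_(p : coord) \sum_(q : coord) h p q.
Proof.
rewrite -(sum_coord (fun p => \sum_(q : coord) h p q)); apply: eq_bigr => x _.
under [in RHS]eq_bigr => a _ do rewrite -sum_coord.
exact: Rsum_exchange.
Qed.

Lemma symmetric2E (eps : R) (w : config -> R) :
  symmetric2 eps w <->
  / 2 * \sum_(p : coord) \sum_(q : coord) Rabs (coord_cov w p q) < eps * INR n ^ 2.
Proof.
rewrite /symmetric2 -sum_coord_pairs.
suff -> : \sum_(x : 'I_n) \sum_(y : 'I_n) tv2 (marg2 w x y)
                 (fun a b => marg1 w x a * marg1 w y b) =
          / 2 * \sum_(x : 'I_n) \sum_(y : 'I_n) \sum_(a : Om) \sum_(b : Om)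
                  Rabs (coord_cov w (x, a) (y, b)) by [].
rewrite Rsum_distrr; apply: eq_bigr => x _; rewrite Rsum_distrr; apply: eq_bigr => y _.
rewrite /tv2; congr (_ * _); apply: eq_bigr => a _; apply: eq_bigr => b _.
by rewrite marg2_expect !marg1_expect.
Qed.

Lemma sum_tv1_marg1 (w w' : config -> R) :
  \sum_(x : 'I_n) tv1 (marg1 w x) (marg1 w' x) =
  / 2 * \sum_(p : coord) Rabs (expect w (coord_ind p) - expect w' (coord_ind p)).
Proof.
rewrite -sum_coord Rsum_distrr; apply: eq_bigr => x _; rewrite /tv1; congr (_ * _).
by apply: eq_bigr => a _; rewrite !marg1_expect.
Qed.

Variables (mu F : config -> R) (K : R).
Hypothesis mu_ge0 : forall s, 0 <= mu s.
Hypothesis mu_sum1 : \sum_(s : config) mu s = 1.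
Hypothesis F_ge0 : forall s, 0 <= F s.
Hypothesis F_leK : forall s, F s <= K.
Hypothesis reweight_sum1 : \sum_(s : config) reweight mu F s = 1.

Lemma reweight_symmetric2 (eps alpha : R) : (0 < n)%N -> 0 < alpha ->
  2 * K ^ 2 * eps <= Rmin alpha 1 ^ 2 ->
  2 * K ^ 2 * (INR #|Om| ^ 2 + 1) * eps <= alpha ^ 2 ->
  symmetric2 eps mu ->
  symmetric2 alpha (reweight mu F) /\
  \sum_(x : 'I_n) tv1 (marg1 mu x) (marg1 (reweight mu F) x) < alpha * INR n.
Proof.
move=> n_gt0 alpha0 eps_g eps_alpha /symmetric2E sym_mu.
have N0 : 0 < INR n by apply: lt_0_INR; apply/ltP.
have g0 : 0 < Rmin alpha 1 by apply: Rmin_pos; lra.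
have g_sqr : Rmin alpha 1 ^ 2 <= alpha.
  by have := Rmin_l alpha 1; have := Rmin_r alpha 1; nra.
have cov_lt : cov_mass mu coord_ind < 2 * eps * INR n ^ 2.
  rewrite /cov_mass.
  under eq_bigr => p _ do under eq_bigr => q _ do rewrite -ccov_mu //.
  apply: (Rmult_lt_reg_l (/ 2)); first lra.
  by apply: (Rlt_le_trans _ _ _ sym_mu); right; field.
have shift_lt := sum_Rabs_shift_lt (f := coord_ind) mu_ge0 mu_sum1 F_ge0 F_leK
  reweight_sum1 N0 g0 cov_lt eps_g.
have shift_ge0 : 0 <= \sum_(p : coord) Rabs (shift mu F coord_ind p).
  by apply: Rsum_ge0 => p _; apply: Rabs_pos.
have card_le : INR #|coord| <= INR #|Om| * INR n.
  by rewrite card_prod card_ord mult_INR; lra.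
have ccov_lt := sum_Rabs_ccov_reweight_lt mu_ge0 mu_sum1 F_ge0 F_leK reweight_sum1
  coord_ind01 N0 alpha0 (pos_INR _) card_le cov_lt eps_alpha.
split.
- apply/symmetric2E.
  have cov_le : \sum_(p : coord) \sum_(q : coord) Rabs (coord_cov (reweight mu F) p q)
      <= \sum_(p : coord) \sum_(q : coord) Rabs (ccov mu coord_ind (reweight mu F) p q)
         + (\sum_(p : coord) Rabs (shift mu F coord_ind p)) ^ 2.
    rewrite Rsum_sqr -Rsum_split; apply: Rsum_le => p _.
    rewrite -Rsum_split; apply: Rsum_le => q _.
    rewrite /coord_cov ccov_reweight // -Rabs_mult -(Rabs_Ropp (_ * _)).
    exact: Rabs_triang.
  have : (\sum_(p : coord) Rabs (shift mu F coord_ind p)) ^ 2 <= alpha * INR n ^ 2.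
    apply: Rle_trans (_ : (Rmin alpha 1 * INR n) ^ 2 <= _).
      by apply: pow_incr; split; [exact: shift_ge0 | exact: Rlt_le shift_lt].
    by rewrite Rpow_mult_distr; apply: Rmult_le_compat_r; [apply: pow2_ge_0 |].
  lra.
- rewrite sum_tv1_marg1.
  rewrite (eq_bigr (fun p => Rabs (shift mu F coord_ind p))); last first.
    move=> p _; rewrite (expect_reweight coord_ind) //.
    by rewrite (_ : _ - _ = - shift mu F coord_ind p) ?Rabs_Ropp //; ring.
  have := Rmin_l alpha 1; nra.
Qed.

End CoordinateEvents.

Lemma finite_Rbounds (T : finType) (f : T -> R) : (forall x, 0 < f x) ->
  exists l u, 0 < l /\ forall x, l <= f x <= u.
Proof.
move=> f_pos.
suff [l [u [l0 lu]]] : exists l u, 0 < l /\ forall x, x \in enum T -> l <= f x <= u.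
  by exists l, u; split=> // x; apply: lu; rewrite mem_enum.
elim: (enum T) => [|y r [l [u [l0 lu]]]]; first by exists 1, 0; split; [lra|].
exists (Rmin l (f y)), (Rmax u (f y)); split; first exact: Rmin_pos.
move=> x; rewrite inE => /orP [/eqP -> | xr].
  by split; [apply: Rmin_r | apply: Rmax_r].
have [lx ux] := lu x xr.
by split; [apply: Rle_trans (Rmin_l _ _) lx | apply: Rle_trans ux (Rmax_l _ _)].
Qed.

Lemma family_Rbounds (T : finType) (Psi : list (T -> R)) :
  (forall psi, List.In psi Psi -> forall x, 0 < psi x) ->
  exists l u, 0 < l /\ forall psi, List.In psi Psi -> forall x, l <= psi x <= u.
Proof.
elim: Psi => [|psi Psi IHPsi] pos; first by exists 1, 0; split; [lra|].
have [l [u [l0 lu]]] := IHPsi (fun q q_in => pos q (or_intror q_in)).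
have [l' [u' [l'0 lu']]] := finite_Rbounds (pos psi (or_introl erefl)).
exists (Rmin l l'), (Rmax u u'); split; first exact: Rmin_pos.
move=> q [<- | q_in] x.
  have [lx ux] := lu' x.
  by split; [apply: Rle_trans (Rmin_r _ _) lx | apply: Rle_trans ux (Rmax_r _ _)].
have [lx ux] := lu q q_in x.
by split; [apply: Rle_trans (Rmin_l _ _) lx | apply: Rle_trans ux (Rmax_l _ _)].
Qed.

Lemma psiJ_bounds (Om : finType) (k : nat) (psi : {ffun 'I_k -> Om} -> R)
    (J : {set 'I_k}) (tau : 'I_k -> Om) (l u : R) :
  (0 < #|Om|)%N -> 0 < l -> (forall rho, l <= psi rho <= u) ->
  l / INR #|Om| ^ k <= psiJ psi J tau <= INR #|{ffun 'I_k -> Om}| * u.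
Proof.
move=> Om_gt0 l0 psi_b.
have Om1 : 1 <= INR #|Om| by apply: (le_INR 1); apply/leP.
have pow1 : 1 <= INR #|Om| ^ (k - #|J|) by apply: pow_R1_Rle.
have pow_le : INR #|Om| ^ (k - #|J|) <= INR #|Om| ^ k.
  by apply: Rle_pow => //; apply/leP; apply: leq_subr.
rewrite /psiJ; set S := \sum_(rho | _) psi rho.
have S_ge : l <= S.
  pose rho0 : {ffun 'I_k -> Om} := [ffun j => tau j].
  apply: Rle_trans (proj1 (psi_b rho0)) _; apply: Rsum_ge_term.
  - by apply/forall_inP => j _; rewrite ffunE.
  - by move=> rho _; have := psi_b rho; lra.
have S_le : S <= INR #|{ffun 'I_k -> Om}| * u.
  rewrite -Rsum_const /S big_mkcond; apply: Rsum_le => rho _.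
  by case: ifP => _; have := psi_b rho; lra.
have inv_le1 : 0 < / INR #|Om| ^ (k - #|J|) <= 1.
  split; first by apply: Rinv_0_lt_compat; lra.
  by rewrite -Rinv_1; apply: Rinv_le_contravar => //; lra.
split.
- apply: Rle_trans (_ : l / INR #|Om| ^ (k - #|J|) <= _).
    by apply: Rmult_le_compat_l; [lra | apply: Rinv_le_contravar => //; lra].
  by apply: Rmult_le_compat_r; lra.
- by apply: Rle_trans S_le; rewrite /Rdiv; nra.
Qed.

Section GibbsMeasures.
Variables (Om : finType) (k n : nat).
Local Notation config := {ffun 'I_n -> Om}.
Local Notation graph := (factor_graph Om k n).

Definition factors_within (lo U : R) (G : graph) : Prop :=
  forall a, List.In a G -> forall tau, lo <= psiJ (c_psi a) (c_J a) tau <= U.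

Lemma gweight_cat (G H : graph) s : gweight (G ++ H) s = gweight G s * gweight H s.
Proof. by rewrite /gweight big_cat. Qed.

Lemma gweight_bounds (lo U : R) (G : graph) s : 0 <= lo -> factors_within lo U G ->
  lo ^ size G <= gweight G s <= U ^ size G.
Proof. by move=> lo0 G_b; apply: Rprod_bounds => // a a_in; apply: G_b. Qed.

Lemma factors_within_cat (lo U : R) (G H : graph) :
  factors_within lo U G -> factors_within lo U H -> factors_within lo U (G ++ H).
Proof.
move=> + H_b; elim: G => [|b G IHG] G_b a /=; first exact: H_b.
case=> [<- | a_in]; first by apply: G_b; left.
by apply: IHG a_in => c c_in; apply: G_b; right.
Qed.

Lemma partition_fn_gt0 (lo U : R) (G : graph) (s0 : config) :
  0 < lo -> factors_within lo U G -> 0 < partition_fn G.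
Proof.
move=> lo0 G_b.
have w_pos s : 0 < gweight G s.
  by apply: Rlt_le_trans (proj1 (gweight_bounds s (Rlt_le _ _ lo0) G_b)); apply: pow_lt.
apply: Rlt_le_trans (w_pos s0) _; apply: (Rsum_ge_term (P := xpredT)) => // s _.
exact: Rlt_le.
Qed.

Lemma gibbs_sum1 (G : graph) : 0 < partition_fn G -> \sum_(s : config) gibbs G s = 1.
Proof. by move=> Z0; rewrite /gibbs /Rdiv -Rsum_distrl -/(partition_fn G); field; lra. Qed.

Lemma gibbs_ge0 (lo U : R) (G : graph) s :
  0 <= lo -> factors_within lo U G -> 0 < partition_fn G -> 0 <= gibbs G s.
Proof.
move=> lo0 G_b Z0; apply: Rle_mult_inv_pos => //.
by apply: Rle_trans (proj1 (gweight_bounds s lo0 G_b)); apply: pow_le.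
Qed.

Section AddedConstraints.
Variables (G bs : graph) (lo U : R) (s0 : config).
Hypothesis lo_gt0 : 0 < lo.
Hypothesis G_within : factors_within lo U G.
Hypothesis bs_within : factors_within lo U bs.

Definition added_density (s : config) : R :=
  gweight bs s * partition_fn G / partition_fn (G ++ bs).

Let ZG_gt0 : 0 < partition_fn G := partition_fn_gt0 s0 lo_gt0 G_within.
Let ZGbs_gt0 : 0 < partition_fn (G ++ bs) :=
  partition_fn_gt0 s0 lo_gt0 (factors_within_cat G_within bs_within).

Lemma gibbs_cat : gibbs (G ++ bs) = reweight (gibbs G) added_density.
Proof.
apply: functional_extensionality => s.
by rewrite /reweight /gibbs /added_density gweight_cat; field; lra.
Qed.

Lemma added_density_ge0 s : 0 <= added_density s.
Proof.
have := proj1 (gweight_bounds s (Rlt_le _ _ lo_gt0) bs_within).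
have := pow_lt _ (size bs) lo_gt0.
by move=> *; apply: Rle_mult_inv_pos => //; apply: Rmult_le_pos; lra.
Qed.

Lemma reweight_added_sum1 : \sum_(s : config) reweight (gibbs G) added_density s = 1.
Proof. by rewrite -gibbs_cat gibbs_sum1. Qed.

(* Each added weight is at least [lo ^ size bs], so the normalisation grows by
   at least that factor. *)
Lemma added_density_le s : added_density s <= (U / lo) ^ size bs.
Proof.
have [w_lo w_hi] := gweight_bounds s (Rlt_le _ _ lo_gt0) bs_within.
have L0 : 0 < lo ^ size bs by apply: pow_lt.
have Z_ge : lo ^ size bs * partition_fn G <= partition_fn (G ++ bs).
  rewrite /partition_fn Rsum_distrr; apply: Rsum_le => s' _; rewrite gweight_cat.
  have := proj1 (gweight_bounds s' (Rlt_le _ _ lo_gt0) bs_within).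
  have := proj1 (gweight_bounds s' (Rlt_le _ _ lo_gt0) G_within).
  have := pow_le _ (size G) (Rlt_le _ _ lo_gt0); nra.
have inv_le : / partition_fn (G ++ bs) <= / (lo ^ size bs * partition_fn G).
  by apply: Rinv_le_contravar => //; apply: Rmult_lt_0_compat.
rewrite /added_density /Rdiv Rpow_mult_distr pow_inv.
apply: Rle_trans (Rmult_le_compat_l _ _ _ _ inv_le) _.
  by apply: Rmult_le_pos; lra.
rewrite (_ : gweight bs s * partition_fn G * / (lo ^ size bs * partition_fn G) =
             gweight bs s * / lo ^ size bs); last by field; lra.
by apply: Rmult_le_compat_r => //; apply: Rlt_le; apply: Rinv_0_lt_compat.
Qed.
End AddedConstraints.
End GibbsMeasures.

Lemma Rmult_le_of_le_div (a b c : R) : 0 < c -> b <= a / c -> c * b <= a.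
Proof.
move=> c0 b_le; have := Rmult_le_compat_l c _ _ (Rlt_le _ _ c0) b_le.
by rewrite (_ : c * (a / c) = a) //; field; lra.
Qed.

Lemma conclusion_card0 (Om : finType) (n : nat) (mu nu : {ffun 'I_n -> Om} -> R) (alpha : R) :
  #|Om| = 0%N -> (0 < n)%N -> 0 < alpha ->
  symmetric2 alpha nu /\
  \sum_(x : 'I_n) tv1 (marg1 mu x) (marg1 nu x) < alpha * INR n.
Proof.
move=> Om0 n_gt0 alpha0.
have sum0 (f : Om -> R) : \sum_(a : Om) f a = 0.
  by apply: big1 => a _; move: (card0_eq Om0 a); rewrite inE.
have N0 : 0 < INR n by apply: lt_0_INR; apply/ltP.
split.
- rewrite /symmetric2 /tv2 big1 => [|x _]; last by apply: big1 => y _; rewrite sum0; ring.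
  by apply: Rmult_lt_0_compat => //; apply: pow_lt.
- rewrite /tv1 big1 => [|x _]; last by rewrite sum0; ring.
  exact: Rmult_lt_0_compat.
Qed.

Theorem lemma7 (Om : finType) (k : nat) (Psi : list ({ffun 'I_k -> Om} -> R)) :
  (3 <= k)%N ->
  Psi <> nil ->
  (forall psi, List.In psi Psi -> forall s, 0 < psi s) ->
  forall L : nat, (0 < L)%N ->
  forall alpha : R, 0 < alpha ->
  exists eps : R, 0 < eps /\
  exists n0 : nat,
  forall (n : nat), (n0 < n)%N ->
  forall G : factor_graph Om k n,
    (forall a, List.In a G -> in_Psi_star Psi a) ->
    symmetric2 eps (gibbs G) ->
  forall bs : factor_graph Om k n,
    size bs = L ->
    (forall b, List.In b bs -> in_Psi_star Psi b) ->
    symmetric2 alpha (gibbs (G ++ bs)) /\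
    \big[Rplus/0]_(x : 'I_n) tv1 (marg1 (gibbs G) x) (marg1 (gibbs (G ++ bs)) x)
      < alpha * INR n.
Proof.
move=> _ _ Psi_pos L _ alpha alpha0.
have [Om0 | Om_gt0] := posnP #|Om|.
  exists 1; split; first lra.
  by exists 0%N => n n_gt0 *; apply: conclusion_card0.
have [o _] := card_gt0P Om_gt0.
have [l [u [l0 Psi_b]]] := family_Rbounds Psi_pos.
pose lo := l / INR #|Om| ^ k.
pose U := INR #|{ffun 'I_k -> Om}| * u.
have lo0 : 0 < lo.
  by apply: Rdiv_lt_0_compat => //; apply: pow_lt; apply: lt_0_INR; apply/ltP.
have within n (H : factor_graph Om k n) :
    (forall a, List.In a H -> in_Psi_star Psi a) -> factors_within lo U H.
  by move=> H_psi a a_in tau; apply: psiJ_bounds => // rho; apply: Psi_b; apply: H_psi.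
pose K := Rmax 1 ((U / lo) ^ L).
have K0 : 0 < K by apply: Rlt_le_trans (Rmax_l _ _); lra.
have K20 : 0 < 2 * K ^ 2 by have := pow_lt _ 2 K0; lra.
have Om20 : 0 < 2 * K ^ 2 * (INR #|Om| ^ 2 + 1).
  by apply: Rmult_lt_0_compat => //; have := pow2_ge_0 (INR #|Om|); lra.
pose eps := Rmin (Rmin alpha 1 ^ 2 / (2 * K ^ 2))
                 (alpha ^ 2 / (2 * K ^ 2 * (INR #|Om| ^ 2 + 1))).
exists eps; split.
  by apply: Rmin_pos; apply: Rdiv_lt_0_compat => //; apply: pow_lt;
    [apply: Rmin_pos; lra | lra].
exists 0%N => n n_gt0 G G_psi sym_G bs bs_size bs_psi.
pose s0 : {ffun 'I_n -> Om} := [ffun => o].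
have G_within := within n G G_psi; have bs_within := within n bs bs_psi.
have Z_gt0 := partition_fn_gt0 s0 lo0 G_within.
rewrite (gibbs_cat s0 lo0 G_within bs_within).
apply: (reweight_symmetric2 (K := K) _ _ _ _ _ n_gt0 alpha0 _ _ sym_G).
- by move=> s; apply: (gibbs_ge0 _ (Rlt_le _ _ lo0) G_within).
- exact: gibbs_sum1.
- exact: added_density_ge0 s0 lo0 G_within bs_within.
- move=> s; apply: Rle_trans (Rmax_r 1 _); rewrite -bs_size.
  exact: added_density_le s0 lo0 G_within bs_within s.
- exact: reweight_added_sum1 s0 lo0 G_within bs_within.
- by apply: Rmult_le_of_le_div => //; apply: Rmin_l.
- by apply: Rmult_le_of_le_div => //; apply: Rmin_r.
Qed.
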